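(* Let $\mu$ be a Borel probability measure on $\mathbb{C}$ with compact support, and let $E=\{z\in\widehat{\mathbb{C}}:T_{\{\infty\},\mu}(z)=1\}$. If $z\in E$ and $k\in\mathbb{N}$, then $f^{(k)}_\omega(z)\in E$ for $\mathbb{P}_\mu$-almost every $\omega\in\Omega_\mu$.
   Context: $f_c(z)=z^2+c$, extended to $\widehat{\mathbb{C}}$ by $f_c(\infty)=\infty$. $\mathbb{P}_\mu$ is the infinite product of $\mu$ on $\Omega_\mu=\prod_{n\ge1}\operatorname{supp}\mu$. For $\omega=(c_n)$, $f^{(n)}_\omega=f_{c_n}\circ\cdots\circ f_{c_1}$, and $T_{\{\infty\},\mu}(z)=\mathbb{P}_\mu(\{\omega: f^{(n)}_\omega(z)\to\infty \text{ as } n\to\infty\})$. *)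

From HB Require Import structures.
From mathcomp Require Import all_boot all_order all_algebra.
From mathcomp Require Import all_classical all_reals all_analysis.
Import numFieldNormedType.Exports.
Set Implicit Arguments. Unset Strict Implicit. Unset Printing Implicit Defensive.
Import Order.TTheory GRing.Theory Num.Theory.
Local Open Scope classical_set_scope.
Local Open Scope ring_scope.

(* The complex plane C is modelled as R * R (z = x + i y  <->  (x, y)),
   with its Borel sigma-algebra (= product of the Borel sigma-algebras of R)
   and product topology. *)
Notation cplx R := (R * R)%type.

Definition cnorm2 (R : realType) (z : cplx R) : R := z.1 ^+ 2 + z.2 ^+ 2.

(* f_c(z) = z^2 + c, written in coordinates. *)
Definition fquad (R : realType) (c z : cplx R) : cplx R :=
  (z.1 ^+ 2 - z.2 ^+ 2 + c.1, 2 * z.1 * z.2 + c.2).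

(* The Riemann sphere: None is the point at infinity. *)
Notation csphere R := (option (cplx R)).

Definition fhat (R : realType) (c : cplx R) (z : csphere R) : csphere R :=
  match z with None => None | Some w => Some (fquad c w) end.

(* Sequence space: omega = (c_1, c_2, ...) is stored as omega 0, omega 1, ... *)
Notation seqsp R := (nat -> cplx R).

(* Product sigma-algebra on the sequence space: generated by the
   coordinate maps omega |-> omega n. *)
Definition coord_sets (R : realType) : set (set (seqsp R)) :=
  [set A | exists n (B : set (cplx R)), measurable B /\
             A = (fun w : seqsp R => w n) @^-1` B].

Notation Omega R := (g_sigma_algebraType (@coord_sets R)).

Definition is_product_measure (R : realType)
  (mu : probability (cplx R) R) (P : probability (Omega R) R) : Prop :=
  forall (n : nat) (B : nat -> set (cplx R)),
    (forall i, measurable (B i)) ->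
    P [set w : Omega R | forall i, (i < n)%N -> B i (w i)]
    = (\prod_(i < n) mu (B i))%E.

(* f^{(n)}_omega = f_{c_n} o ... o f_{c_1} *)
Fixpoint fiter (R : realType) (w : seqsp R) (n : nat) (z : csphere R) : csphere R :=
  match n with
  | O => z
  | S m => fhat (w m) (fiter w m z)
  end.

Definition tends_to_infty (R : realType) (u : nat -> csphere R) : Prop :=
  forall M : R, exists N : nat, forall n, (N <= n)%N ->
    match u n with None => true | Some w => M < cnorm2 w end.

Definition Tinf (R : realType) (P : probability (Omega R) R) (z : csphere R) : \bar R :=
  P [set w : Omega R | tends_to_infty (fun n => fiter w n z)].

Definition Eset (R : realType) (P : probability (Omega R) R) : set (csphere R) :=
  [set z | Tinf P z = 1%E].

Definition compact_support (R : realType) (mu : probability (cplx R) R) : Prop :=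
  exists K : set (cplx R), compact K /\ mu (~` K) = 0%E.

(* The event "the orbit of z escapes" splits along the first k coordinates:
   a sequence escapes from z iff its tail (from index k on) escapes from the
   point f^(k)_w(z) reached after k steps.  As P is the infinite product of mu,
   splitting a sequence into its first k terms and its tail identifies P with
   the image of P x P, so Fubini gives
     T(z) = \int T(f^(k)_u(z)) dP(u).
   When T(z) = 1 the integrand, bounded by 1, must equal 1 almost everywhere. *)
From mathcomp Require Import all_boot all_order all_algebra.
From mathcomp Require Import all_classical all_reals all_analysis.
From mathcomp Require Import measurable_realfun zify lra.
Import numFieldNormedType.Exports.
Import Order.TTheory GRing.Theory Num.Theory.
Local Open Scope classical_set_scope.
Local Open Scope ring_scope.

Lemma big_ord_split_minn {T : Type} {idx : T} (op : Monoid.law idx)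
    (n k : nat) (F : nat -> T) :
  \big[op/idx]_(i < n) F i =
  op (\big[op/idx]_(i < minn n k) F i) (\big[op/idx]_(i < n - k) F (i + k)%N).
Proof.
have [le_nk | lt_kn] := leqP n k.
  by move: le_nk; rewrite -subn_eq0 => /eqP ->; rewrite big_ord0 Monoid.mulm1.
rewrite -!(big_mkord xpredT F) -(big_mkord xpredT (fun i => F (i + k)%N)).
by rewrite (big_cat_nat (leq0n k) (ltnW lt_kn)) //= -{2}[k]add0n big_addn.
Qed.

Lemma ae_eq1_of_le1_integral1 {d : measure_display} {T : measurableType d}
    {R : realType} (P : probability T R) (f : T -> \bar R) :
  measurable_fun setT f -> (forall x, 0 <= f x <= 1)%E ->
  (\int[P]_x f x = 1)%E -> {ae P, forall x, f x = 1%E}.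
Proof.
move=> mf f01 intf1.
have f_fin x : f x \is a fin_num.
  by have /andP[f0 f1] := f01 x; rewrite ge0_fin_numE // (le_lt_trans f1) ?ltry.
pose h x := (1 - f x)%E.
have h0 x : (0 <= h x)%E by rewrite sube_ge0 ?f_fin ?orbT //; case/andP: (f01 x).
have mh : measurable_fun setT h by apply: emeasurable_funB.
have int_hf : (\int[P]_x (h x + f x) = \int[P]_x h x + 1)%E.
  by rewrite ge0_integralD ?intf1 // => x _; case/andP: (f01 x).
have int_1 : (\int[P]_x (h x + f x) = 1)%E.
  rewrite (eq_integral (cst 1%E)) => [|x _]; last by rewrite /h subeK.
  by rewrite integral_cst // mul1e; exact: probability_setT.
have int_h0 : (\int[P]_x h x = 0)%E.
  move: int_hf; rewrite int_1; case: (\int[P]_x h x)%E => [r| |] //=.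
  by rewrite -EFinD => -[r0]; congr EFin; lra.
have /(ae_eq_integral_abs P measurableT mh).1 : (\int[P]_x `|h x| = 0)%E.
  by rewrite (eq_integral h) // => x _; rewrite gee0_abs.
apply: filterS => x /(_ I) hx0.
by rewrite -(subeK 1%E (f_fin x)) [X in (X + _)%E]hx0 add0e.
Qed.

Lemma tends_to_infty_shift {R : realType} (u : nat -> csphere R) (k : nat) :
  tends_to_infty (fun n => u (n + k)%N) <-> tends_to_infty u.
Proof.
split => u_infty M; have [N uN] := u_infty M.
- exists (N + k)%N => n le_Nk_n; have := uN (n - k)%N.
  by rewrite subnK; [apply; lia | lia].
- by exists N => n le_Nn; apply: uN; lia.
Qed.

Lemma fiterD {R : realType} (w : seqsp R) (n k : nat) (z : csphere R) :
  fiter w (n + k) z = fiter (fun i => w (i + k)%N) n (fiter w k z).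
Proof. by elim: n => //= n ->. Qed.

Lemma eq_fiter {R : realType} (w w' : seqsp R) (k : nat) (z : csphere R) :
  (forall i, (i < k)%N -> w i = w' i) -> fiter w k z = fiter w' k z.
Proof. by elim: k => //= k IH eq_ww'; rewrite eq_ww' // IH // => i /ltnW/eq_ww'. Qed.

Section sequence_space.
Context {R : realType}.

Definition escape (z : csphere R) : set (Omega R) :=
  [set w : Omega R | tends_to_infty (fun n => fiter w n z)].

Definition seqcat (k : nat) (p : Omega R * Omega R) : Omega R :=
  fun i => if (i < k)%N then p.1 i else p.2 (i - k)%N.

Lemma fiter_seqcat (k n : nat) (u v : Omega R) (z : csphere R) :
  fiter (seqcat k (u, v)) (n + k) z = fiter v n (fiter u k z).
Proof.
rewrite fiterD (@eq_fiter _ _ u k) => [|i ik]; last by rewrite /seqcat ik.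
congr fiter; apply: funext => i.
by rewrite /seqcat ltnNge leq_addl addnK.
Qed.

Lemma xsection_seqcat_escape (k : nat) (z : csphere R) (u : Omega R) :
  xsection (seqcat k @^-1` escape z) u = escape (fiter u k z).
Proof.
rewrite /xsection; apply/funext => v /=; rewrite inE /escape /=.
apply/propext; rewrite -(tends_to_infty_shift _ k).
by rewrite (funext (fun n => fiter_seqcat k n u v z)).
Qed.

Definition cylinder (n : nat) (B : nat -> set (cplx R)) : set (Omega R) :=
  [set w : Omega R | forall i, (i < n)%N -> B i (w i)].

Definition cylinders : set (set (Omega R)) :=
  [set A | exists n B, (forall i, measurable (B i)) /\ A = cylinder n B].

Lemma measurable_coord (i : nat) : measurable_fun setT (fun w : Omega R => w i).
Proof. by move=> _ B mB; rewrite setTI; apply: sub_sigma_algebra; exists i, B. Qed.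

Lemma measurable_cylinder (n : nat) (B : nat -> set (cplx R)) :
  (forall i, measurable (B i)) -> measurable (cylinder n B).
Proof.
move=> mB; have -> : cylinder n B = \bigcap_(i in [set i | (i < n)%N])
    ((fun w : Omega R => w i) @^-1` B i).
  by apply/seteqP; split => w wB i /wB.
apply: bigcap_measurableType => i _.
by rewrite -[_ @^-1` _]setTI; apply: measurable_coord.
Qed.

Lemma measurable_cylindersE : @measurable _ (Omega R) = <<s cylinders >>.
Proof.
apply/seteqP; split; apply: smallest_sub.
- exact: smallest_sigma_algebra.
- move=> _ [n [B [mB ->]]]; apply: sub_sigma_algebra.
  exists n.+1, (fun i => if i == n then B else setT); split.
    by move=> i; case: ifP.
  apply/seteqP; split => w /=.
  + by move=> Bw i _; case: ifP => // /eqP ->.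
  + by move/(_ n (ltnSn n)); rewrite eqxx.
- exact: sigma_algebra_measurable.
- by move=> _ [n [B [mB ->]]]; exact: measurable_cylinder.
Qed.

Lemma cylinders_setI_closed : setI_closed cylinders.
Proof.
move=> _ _ [n1 [B1 [mB1 ->]]] [n2 [B2 [mB2 ->]]].
pose pad n (B : nat -> set (cplx R)) i := if (i < n)%N then B i else setT.
exists (maxn n1 n2), (fun i => pad n1 B1 i `&` pad n2 B2 i); split.
  by move=> i; apply: measurableI; rewrite /pad; case: ifP.
apply/seteqP; split => w /=.
- by move=> [B1w B2w] i _; rewrite /pad; split; case: ifP => // lt_i;
    [exact: B1w | exact: B2w].
- move=> Bw; split => i lt_in.
  + by have [] := Bw i (leq_trans lt_in (leq_maxl _ _)); rewrite /pad lt_in.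
  + by have [] := Bw i (leq_trans lt_in (leq_maxr _ _)); rewrite /pad lt_in.
Qed.

Lemma measurable_seqcat (k : nat) : measurable_fun setT (seqcat k).
Proof.
apply: (@measurability _ _ _ _ setT (seqcat k) (@coord_sets R) erefl).
move=> _ [_ [n [B [mB ->]]] <-]; rewrite setTI.
have [lt_nk | le_kn] := ltnP n k.
- have -> : seqcat k @^-1` ((fun w : Omega R => w n) @^-1` B) =
      ((fun w : Omega R => w n) @^-1` B) `*` setT.
    by apply/seteqP; split => -[u v]; rewrite /seqcat /= lt_nk //; case.
  apply: measurableX => //; rewrite -[_ @^-1` _]setTI; exact: measurable_coord.
- have -> : seqcat k @^-1` ((fun w : Omega R => w n) @^-1` B) =
      setT `*` ((fun w : Omega R => w (n - k)%N) @^-1` B).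
    by apply/seteqP; split => -[u v]; rewrite /seqcat /= ltnNge le_kn //; case.
  apply: measurableX => //; rewrite -[_ @^-1` _]setTI; exact: measurable_coord.
Qed.

Lemma seqcat_preimage_cylinder (k n : nat) (B : nat -> set (cplx R)) :
  seqcat k @^-1` cylinder n B =
  cylinder (minn n k) B `*` cylinder (n - k) (fun j => B (j + k)%N).
Proof.
apply/seteqP; split => -[u v] /=.
- move=> uvB; split => /= i lt_i.
  + have lt_ik : (i < k)%N by lia.
    by have := uvB i; rewrite /seqcat /= lt_ik; apply; lia.
  + have ge_ik : (i + k < k)%N = false by lia.
    by have := uvB (i + k)%N; rewrite /seqcat /= ge_ik addnK; apply; lia.
- move=> [uB vB] i lt_in; rewrite /seqcat /=; case: ltnP => [lt_ik | le_ki].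
  + by apply: uB; lia.
  + by have := vB (i - k)%N; rewrite subnK //; apply; lia.
Qed.

Lemma product_measure_seqcat {mu : probability (cplx R) R}
    {P : probability (Omega R) R} (k : nat) {A : set (Omega R)} :
  is_product_measure mu P -> measurable A ->
  P A = pushforward (P \x P)%E (seqcat k) A.
Proof.
move=> hP mA.
apply: (measure_unique cylinders (fun _ => setT) measurable_cylindersE
  cylinders_setI_closed) => //.
- by move=> _; exists 0%N, (fun _ => setT); split => //; apply/seteqP; split.
- by apply/seteqP; split => // w _; exists 0%N.
- exact: measurable_seqcat.
- move=> mseqcat _ [n [B [mB ->]]].
  rewrite /= /pushforward seqcat_preimage_cylinder product_measure1E;
    try exact: measurable_cylinder.
  rewrite (hP n) // (big_ord_split_minn _ n k (fun i => mu (B i))).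
  by congr (_ * _)%E; apply/esym/hP.
- by move=> _; rewrite (le_lt_trans (probability_le1 _ measurableT)) ?ltry.
Qed.

Fixpoint orbit (w : seqsp R) (z : cplx R) (n : nat) : cplx R :=
  if n is m.+1 then fquad (w m) (orbit w z m) else z.

Lemma fiter_Some (w : seqsp R) (z : cplx R) (n : nat) :
  fiter w n (Some z) = Some (orbit w z n).
Proof. by elim: n => //= n ->. Qed.

Lemma fiter_None (w : seqsp R) (n : nat) : fiter w n None = None.
Proof. by elim: n => //= n ->. Qed.

Lemma measurable_orbit_coords (z : cplx R) (n : nat) :
  measurable_fun setT (fun w : Omega R => (orbit w z n).1) /\
  measurable_fun setT (fun w : Omega R => (orbit w z n).2).
Proof.
elim: n => [|n [m1 m2]] /=; first by split; exact: measurable_cst.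
have c1 := measurableT_comp measurable_fst (measurable_coord n).
have c2 := measurableT_comp measurable_snd (measurable_coord n).
split; apply: measurable_funD => //.
- by apply: measurable_funB; exact: measurable_funX.
- by apply: measurable_funM => //; apply: measurable_funM => //; exact: measurable_cst.
Qed.

Lemma measurable_escape (z : csphere R) : measurable (escape z).
Proof.
case: z => [z|]; last first.
  suff -> : escape None = setT by exact: measurableT.
  by apply/seteqP; split => // w _ M; exists 0%N => n _; rewrite fiter_None.
have -> : escape (Some z) = \bigcap_m \bigcup_N \bigcap_(n in [set n | (N <= n)%N])
    [set w : Omega R | m%:R < cnorm2 (orbit w z n)].
  apply/seteqP; split => w /=.
  - move=> w_infty m _; have [N wN] := w_infty m%:R; exists N => // n /= le_Nn.
    by have := wN n le_Nn; rewrite fiter_Some.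
  - move=> w_infty M; have [N _ wN] := w_infty (Num.truncn M).+1 I.
    exists N => n le_Nn; rewrite fiter_Some (lt_trans (truncnS_gt M)) //.
    exact: wN.
apply: bigcapT_measurable => m; apply: bigcupT_measurable => N.
apply: bigcap_measurableType => n _.
have [m1 m2] := measurable_orbit_coords z n.
have mnorm : measurable_fun setT (fun w : Omega R => cnorm2 (orbit w z n)).
  by apply: measurable_funD; exact: measurable_funX.
have := mnorm measurableT _ (measurable_itv `]m%:R, +oo[); rewrite setTI.
by congr measurable; apply/seteqP; split => w /=; rewrite in_itv /= andbT.
Qed.

End sequence_space.

Theorem lemma3p6 (R : realType) (mu : probability (cplx R) R)
  (P : probability (Omega R) R) :
  compact_support mu -> is_product_measure mu P ->
  forall (z : csphere R) (k : nat), Eset P z ->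
  {ae P, forall w : Omega R, Eset P (fiter w k z)}.
Proof.
move=> _ hP z k Ez.
have mA : measurable (seqcat k @^-1` escape z).
  by rewrite -[_ @^-1` _]setTI; apply: measurable_seqcat => //; exact: measurable_escape.
pose g u := P (escape (fiter u k z)).
have gE : g = P \o xsection (seqcat k @^-1` escape z).
  by apply: funext => u /=; rewrite xsection_seqcat_escape.
apply: (ae_eq1_of_le1_integral1 P g).
- by rewrite gE; exact: measurable_fun_xsection.
- by move=> u; rewrite measure_ge0 probability_le1 //; exact: measurable_escape.
- rewrite gE -[RHS]Ez /Tinf -/(escape z).
  by rewrite (product_measure_seqcat k hP (measurable_escape z)).
Qed.
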